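(* For $x\in(0,1)$ and $z\in(0,\infty)$, the functions $f_1(k)=\sin(x^k)^{1/k}$, $f_2(k)=\cos(x^k)^{1/k}$ and $f_4(k)=\tanh(z^k)^{1/k}$ are increasing on $(0,\infty)$. *)

From Stdlib Require Import Reals.
Open Scope R_scope.

Definition tanh (a : R) : R := (exp a - exp (- a)) / (exp a + exp (- a)).

Definition f1 (x k : R) : R := Rpower (sin (Rpower x k)) (/ k).
Definition f2 (x k : R) : R := Rpower (cos (Rpower x k)) (/ k).
Definition f4 (z k : R) : R := Rpower (tanh (Rpower z k)) (/ k).

Definition incr_pos (f : R -> R) : Prop :=
  forall k1 k2, 0 < k1 -> k1 < k2 -> f k1 < f k2.

(* Put [a = x^k1] and [b = x^k2], so that [k1 ln b = k2 ln a]; the claim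
   [g(a)^(1/k1) < g(b)^(1/k2)] is [k2 ln g(a) < k1 ln g(b)].  When [g] is
   concave with [g(0) = 0] and [g'(0) = 1] (sin, and tanh for [z < 1]), the
   slope [g(t)/t] decreases and [g(a) < a]; taking logarithms this gives
   [k1 ln g(b) >= k1 ln g(a) + (k2 - k1) ln a > k2 ln g(a)].  When instead
   [k |-> g(x^k)] is nondecreasing with values in (0,1) (cos, and tanh for
   [z >= 1]), the claim holds because [ln g(x^k) < 0] and [k1 < k2]. *)
From Pilot Require Import Defs.
From Stdlib Require Import Reals Lra Psatz.
From Coquelicot Require Import Coquelicot.
Open Scope R_scope.

Lemma Rpower_inv_lt u v k1 k2 : 0 < k1 < k2 -> k2 * ln u < k1 * ln v ->
  Rpower u (/ k1) < Rpower v (/ k2).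
Proof.
  intros Hk Hln; unfold Rpower; apply exp_increasing.
  apply (Rmult_lt_reg_l (k1 * k2)); [nra |].
  replace (k1 * k2 * (/ k1 * ln u)) with (k2 * ln u) by (field; lra).
  replace (k1 * k2 * (/ k2 * ln v)) with (k1 * ln v) by (field; lra).
  exact Hln.
Qed.

Lemma Rpower_lt_base_lt_1 x k1 k2 : 0 < x < 1 -> k1 < k2 ->
  Rpower x k2 < Rpower x k1.
Proof.
  intros Hx Hk; unfold Rpower; apply exp_increasing.
  assert (ln x < 0) by (rewrite <- ln_1; apply ln_increasing; lra).
  nra.
Qed.

Lemma Rpower_lt_1 x k : 0 < x < 1 -> 0 < k -> Rpower x k < 1.
Proof.
  intros Hx Hk; rewrite <- (Rpower_O x) by lra.
  exact (Rpower_lt_base_lt_1 x 0 k Hx Hk).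
Qed.

Lemma Rpower_le_base_ge_1 x k1 k2 : 1 <= x -> k1 <= k2 ->
  Rpower x k1 <= Rpower x k2.
Proof.
  intros Hx Hk; unfold Rpower.
  assert (0 <= ln x) by (rewrite <- ln_1; apply ln_le; lra).
  destruct (Rle_lt_or_eq (k1 * ln x) (k2 * ln x)) as [Hlt | ->]; [nra | |].
  - left; now apply exp_increasing.
  - now right.
Qed.

Lemma incr_pos_Rpower_inv (h : R -> R) :
  (forall k, 0 < k -> 0 < h k < 1) ->
  (forall k1 k2, 0 < k1 -> k1 < k2 -> h k1 <= h k2) ->
  incr_pos (fun k => Rpower (h k) (/ k)).
Proof.
  intros Hbound Hmono k1 k2 Hk1 Hk12; apply Rpower_inv_lt; [lra |].
  pose proof (Hbound k1 Hk1) as Hh1; pose proof (Hmono k1 k2 Hk1 Hk12).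
  assert (ln (h k1) < 0) by (rewrite <- ln_1; apply ln_increasing; lra).
  assert (ln (h k1) <= ln (h k2)) by (apply ln_le; lra).
  nra.
Qed.

Section ConcaveThroughOrigin.

Variables g g' : R -> R.
Hypothesis g_0 : g 0 = 0.
Hypothesis g_derive : forall c, 0 <= c <= 1 -> derivable_pt_lim g c (g' c).
Hypothesis g'_decreasing :
  forall c1 c2, 0 <= c1 -> c1 < c2 -> c2 <= 1 -> g' c2 < g' c1.

Lemma slope_decreasing b a : 0 < b < a -> a <= 1 -> b * g a < a * g b.
Proof.
  intros Hba Ha.
  destruct (MVT_cor2 g g' 0 b ltac:(lra)) as [c1 [E1 Hc1]].
  { intros c Hc; apply g_derive; lra. }
  destruct (MVT_cor2 g g' b a ltac:(lra)) as [c2 [E2 Hc2]].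
  { intros c Hc; apply g_derive; lra. }
  assert (g' c2 < g' c1) by (apply g'_decreasing; lra).
  rewrite g_0 in E1.
  assert (0 < b * (a - b) * (g' c1 - g' c2))
    by (apply Rmult_lt_0_compat; [apply Rmult_lt_0_compat |]; lra).
  nra.
Qed.

Lemma below_tangent_at_0 a : 0 < a <= 1 -> g a < g' 0 * a.
Proof.
  intros Ha.
  destruct (MVT_cor2 g g' 0 a ltac:(lra)) as [c [E Hc]].
  { intros c Hc; apply g_derive; lra. }
  assert (g' c < g' 0) by (apply g'_decreasing; lra).
  rewrite g_0 in E; nra.
Qed.

Hypothesis g'_0 : g' 0 = 1.
Hypothesis g_pos : forall t, 0 < t <= 1 -> 0 < g t.

Lemma incr_pos_Rpower_comp x : 0 < x < 1 ->
  incr_pos (fun k => Rpower (g (Rpower x k)) (/ k)).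
Proof.
  intros Hx k1 k2 Hk1 Hk12; apply Rpower_inv_lt; [lra |].
  set (a := Rpower x k1); set (b := Rpower x k2).
  assert (Hb : 0 < b) by apply exp_pos.
  assert (Hba : b < a) by apply (Rpower_lt_base_lt_1 x k1 k2 Hx Hk12).
  assert (Ha : a < 1) by apply (Rpower_lt_1 x k1 Hx Hk1).
  assert (Hlog : k1 * ln b = k2 * ln a)
    by (unfold a, b; rewrite !ln_Rpower; ring).
  assert (Hga : 0 < g a) by (apply g_pos; lra).
  assert (Hgb : 0 < g b) by (apply g_pos; lra).
  assert (ln (g a) < ln a).
  { apply ln_increasing; [lra |].
    rewrite <- (Rmult_1_l a) at 2; rewrite <- g'_0.
    apply below_tangent_at_0; lra. }
  assert (ln b + ln (g a) < ln a + ln (g b)).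
  { rewrite <- !ln_mult by lra.
    apply ln_increasing; [nra |]; apply slope_decreasing; lra. }
  nra.
Qed.

End ConcaveThroughOrigin.

(* [Reals] exports its own [tanh], which shadows the one of [Defs]. *)
Lemma tanh_0 : Defs.tanh 0 = 0.
Proof. unfold Defs.tanh; rewrite Ropp_0, exp_0; field. Qed.

Lemma tanh_bound t : -1 < Defs.tanh t < 1.
Proof.
  unfold Defs.tanh; pose proof (exp_pos t); pose proof (exp_pos (- t)).
  split; apply Rmult_lt_reg_r with (exp t + exp (- t)); try lra;
    unfold Rdiv; rewrite Rmult_assoc, Rinv_l; lra.
Qed.

Lemma derivable_pt_lim_tanh t :
  derivable_pt_lim Defs.tanh t (1 - Defs.tanh t ^ 2).
Proof.
  apply is_derive_Reals; unfold Defs.tanh.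
  pose proof (exp_pos t); pose proof (exp_pos (- t)).
  auto_derive; [lra |].
  field; lra.
Qed.

Lemma tanh_increasing t1 t2 : t1 < t2 -> Defs.tanh t1 < Defs.tanh t2.
Proof.
  intros Ht.
  destruct (MVT_cor2 Defs.tanh (fun t => 1 - Defs.tanh t ^ 2) t1 t2 Ht)
    as [c [E _]].
  { intros c _; apply derivable_pt_lim_tanh. }
  pose proof (tanh_bound c).
  assert (0 < (1 - Defs.tanh c ^ 2) * (t2 - t1))
    by (apply Rmult_lt_0_compat; nra).
  lra.
Qed.

Lemma tanh_pos t : 0 < t -> 0 < Defs.tanh t.
Proof. intros Ht; rewrite <- tanh_0; now apply tanh_increasing. Qed.

Lemma incr_pos_f1 x : 0 < x < 1 -> incr_pos (f1 x).
Proof.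
  pose proof PI2_1.
  apply (incr_pos_Rpower_comp sin cos).
  - exact sin_0.
  - intros c _; apply derivable_pt_lim_sin.
  - intros c1 c2 H1 H12 H2; apply cos_decreasing_1; lra.
  - exact cos_0.
  - intros t Ht; apply sin_gt_0; lra.
Qed.

Lemma incr_pos_f2 x : 0 < x < 1 -> incr_pos (f2 x).
Proof.
  intros Hx; pose proof PI2_1.
  apply (incr_pos_Rpower_inv (fun k => cos (Rpower x k))).
  - intros k Hk; pose proof (exp_pos (k * ln x)).
    pose proof (Rpower_lt_1 x k Hx Hk).
    split; [apply cos_gt_0; unfold Rpower in *; lra |].
    rewrite <- cos_0; apply cos_decreasing_1; unfold Rpower in *; lra.
  - intros k1 k2 Hk1 Hk12; left.
    pose proof (Rpower_lt_base_lt_1 x k1 k2 Hx Hk12).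
    pose proof (Rpower_lt_1 x k1 Hx Hk1); pose proof (exp_pos (k2 * ln x)).
    apply cos_decreasing_1; unfold Rpower in *; lra.
Qed.

Lemma incr_pos_f4 z : 0 < z -> incr_pos (f4 z).
Proof.
  intros Hz; destruct (Rlt_or_le z 1) as [Hz1 | Hz1].
  - apply (incr_pos_Rpower_comp Defs.tanh (fun t => 1 - Defs.tanh t ^ 2));
      [.. | lra].
    + exact tanh_0.
    + intros c _; apply derivable_pt_lim_tanh.
    + intros c1 c2 H1 H12 _.
      pose proof (tanh_increasing c1 c2 H12).
      assert (0 <= Defs.tanh c1)
        by (destruct H1 as [H1 | <-]; [left; now apply tanh_pos | rewrite tanh_0; lra]).
      nra.
    + rewrite tanh_0; ring.
    + intros t Ht; apply tanh_pos; lra.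
  - apply (incr_pos_Rpower_inv (fun k => Defs.tanh (Rpower z k))).
    + intros k _; split; [apply tanh_pos, exp_pos | apply tanh_bound].
    + intros k1 k2 _ Hk12.
      destruct (Rpower_le_base_ge_1 z k1 k2 Hz1 (Rlt_le _ _ Hk12)) as [H | ->];
        [left; now apply tanh_increasing | lra].
Qed.

Theorem lemma4p1 :
  (forall x : R, 0 < x < 1 -> incr_pos (f1 x) /\ incr_pos (f2 x)) /\
  (forall z : R, 0 < z -> incr_pos (f4 z)).
Proof.
  split.
  - intros x Hx; split; [apply incr_pos_f1 | apply incr_pos_f2]; exact Hx.
  - exact incr_pos_f4.
Qed.
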